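(* For every $\varepsilon>0$ there exists $n_0$ such that for all $n\ge n_0$ the following holds. Let $\mathcal F\subseteq 2^{[n]}$ be a family all of whose sets have size in $[n/2-n^{2/3},\,n/2+n^{2/3}]$. If for every $F\in\mathcal F$ we have $\nabla^j_{\mathcal F}(F)\le\varepsilon n^4$ for all $j\ge4$, then $|\mathcal F|\le(4+400\varepsilon)\binom{n}{\lfloor n/2\rfloor}$.
   Context: $\nabla^j_{\mathcal F}(F):=|\{G\in\mathcal F:\ F\subseteq G,\ |G|=|F|+j\}|$. *)

From HB Require Import structures.
From mathcomp Require Import all_boot all_order all_algebra.
From mathcomp Require Import all_classical all_reals all_analysis.
Set Implicit Arguments. Unset Strict Implicit. Unset Printing Implicit Defensive.

Definition nabla (n : nat) (fam : {set {set 'I_n}}) (F : {set 'I_n}) (j : nat) : nat :=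
  #|[set G in fam | (F \subset G) && (#|G| == #|F| + j)%N]|.

(* Double count the pairs (C, G) of a maximal chain C of subsets of [n] and a
   member G of fam lying on C: there are \sum_(G in fam) |G|! (n - |G|)!, at least
   |fam| n! / 'C(n, n/2), of them. Splitting C at its lowest member F of fam, they
   are also counted by \sum_(F in fam) free_chains F * upper_hits F, where the
   weights free_chains F * (n - |F|)! add up to at most n! (the LYM argument).
   It thus suffices that upper_hits F <= (4 + 390 eps) m! with m = n - |F|, i.e.
   that a random maximal chain from F to [n] meets fam at most 4 + 390 eps times
   on average. Grouped by level j = |G| - |F|, the levels j < 4 contribute at most
   one each, as nabla^j(F) <= 'C(m, j), and the levels j >= 4 at most
   eps n^4 j! (m - j)! / m!, which sums to about 24 * 16 eps since m >= 0.499 n. *)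

From HB Require Import structures.
From mathcomp Require Import all_boot all_order all_algebra.
From mathcomp Require Import all_classical all_reals all_analysis.
(* Restores the finset names (setIidPr, subsetP, ...) shadowed by classical_sets. *)
From mathcomp Require Import fintype finset.
From mathcomp Require Import zify ring lra.
Import Order.TTheory GRing.Theory Num.Theory.
Set Implicit Arguments. Unset Strict Implicit. Unset Printing Implicit Defensive.

Lemma leq_bin_succ N j : j < N - j -> 'C(N, j) <= 'C(N, j.+1).
Proof.
move=> lt_j; rewrite -(leq_pmul2l (ltn0Sn j)) mul_bin_left.
by rewrite leq_mul2r lt_j orbT.
Qed.

Lemma leq_bin_below_mid N i j : i <= j -> j.*2 <= N.+1 -> 'C(N, i) <= 'C(N, j).
Proof.
elim: j => [|j IHj]; first by rewrite leqn0 => /eqP->.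
rewrite leq_eqVlt => /orP[/eqP-> // | lt_ij] le_jN.
by apply: leq_trans (IHj lt_ij _) (leq_bin_succ _); lia.
Qed.

Lemma leq_bin_mid N i j : i <= j -> i + j <= N -> 'C(N, i) <= 'C(N, j).
Proof.
move=> le_ij le_N; case: (leqP j.*2 N.+1) => [|gt_j]; first exact: leq_bin_below_mid.
rewrite -(@bin_sub N j); last lia.
by apply: leq_bin_below_mid; lia.
Qed.

Lemma leq_bin_half N k : 'C(N, k) <= 'C(N, N./2).
Proof.
case: (leqP k N) => [le_kN | lt_Nk]; last by rewrite bin_small.
have le_half : N./2.*2 <= N by rewrite -{2}(odd_double_half N) leq_addl.
have ge_half : N <= N./2.*2.+1 by rewrite -{1}(odd_double_half N); case: (odd N).
case: (leqP k N./2) => le_k; first by apply: leq_bin_mid; lia.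
by rewrite -(bin_sub le_kN); apply: leq_bin_mid; lia.
Qed.

Lemma leq_fact_mul_fact_sub m i j : i <= j -> i + j <= m ->
  j`! * (m - j)`! <= i`! * (m - i)`!.
Proof.
move=> le_ij le_m; have pos : 0 < 'C(m, i) by rewrite bin_gt0; lia.
rewrite -(leq_pmul2l pos) bin_fact; last lia.
by rewrite -(@bin_fact m j) ?leq_mul2r ?leq_bin_mid ?orbT //; lia.
Qed.

Lemma fact_leq_bin_half_mul n k : k <= n -> n`! <= 'C(n, n./2) * (k`! * (n - k)`!).
Proof. by move=> le_kn; rewrite -{1}(bin_fact le_kn) leq_mul2r leq_bin_half orbT. Qed.

Lemma expn_mul_fact_leq a k : a.+1 ^ k * a`! <= (a + k)`!.
Proof.
elim: k => [|k IHk]; first by rewrite addn0 mul1n.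
by rewrite expnS -mulnA addnS factS leq_mul // ltnS leq_addr.
Qed.

Lemma leq_mul_fact_sub m k x d : k <= m -> x <= d * (m - k).+1 ^ k ->
  x * (m - k)`! <= d * m`!.
Proof.
move=> le_km le_x; apply: leq_trans (leq_mul le_x (leqnn _)) _.
have := expn_mul_fact_leq (m - k) k; rewrite subnK // => le_fact.
by rewrite -mulnA leq_mul2l le_fact orbT.
Qed.

Section LevelFactorialBounds.
Variables n m : nat.
(* [6 * 1000] rather than [6000]: lia does not see through large nat literals. *)
Hypothesis m_large : 499 * n + 6 * 1000 <= 1000 * m.

Lemma level4_fact_bound : n ^ 4 * (4`! * (m - 4)`!) <= 388 * m`!.
Proof.
rewrite mulnA; apply: leq_mul_fact_sub; first lia.
have : (499 * n) ^ 4 <= (1000 * (m - 4).+1) ^ 4 by rewrite leq_exp2r //; lia.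
rewrite !expnMn (_ : 4`! = 24) //; set N4 := n ^ 4; set M4 := (m - 4).+1 ^ 4; lia.
Qed.

Hypothesis n_large : 10 ^ 5 <= n.

Lemma level5_fact_bound : n ^ 4 * (5`! * (m - 5)`!) <= m`!.
Proof.
rewrite mulnA -[m`!]mul1n; apply: leq_mul_fact_sub; first lia.
have : (499 * n) ^ 5 <= (1000 * (m - 5).+1) ^ 5 by rewrite leq_exp2r //; lia.
have : 10 ^ 5 * n ^ 4 <= n ^ 5 by rewrite (expnS n 4) leq_mul2r n_large orbT.
rewrite !expnMn (_ : 5`! = 120) //; set N4 := n ^ 4; set N5 := n ^ 5.
set M5 := (m - 5).+1 ^ 5; lia.
Qed.

Lemma tail_fact_bound : n * (n ^ 4 * (6`! * (m - 6)`!)) <= m`!.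
Proof.
rewrite mulnA -expnS mulnA -[m`!]mul1n; apply: leq_mul_fact_sub; first lia.
have : (499 * n) ^ 6 <= (1000 * (m - 6).+1) ^ 6 by rewrite leq_exp2r //; lia.
have : 10 ^ 5 * n ^ 5 <= n ^ 6 by rewrite (expnS n 5) leq_mul2r n_large orbT.
rewrite !expnMn (_ : 6`! = 720) //; set N5 := n ^ 5; set N6 := n ^ 6.
set M6 := (m - 6).+1 ^ 6; lia.
Qed.

End LevelFactorialBounds.

Section FirstHitChains.
Variables (n : nat) (fam : {set {set 'I_n}}).

(* [free_chains S] counts the maximal chains set0 = S_0 \subset ... \subset S_k = S
   whose members other than S avoid fam, built top-down by deleting one element at
   a time; [hit_chains G] counts the maximal chains of subsets of G meeting fam,
   sorted by their lowest member F in fam. *)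
Fixpoint free_chains_rec (k : nat) (S : {set 'I_n}) : nat :=
  if k is k'.+1 then \sum_(x in S | S :\ x \notin fam) free_chains_rec k' (S :\ x)
  else 1.

Definition free_chains (S : {set 'I_n}) : nat := free_chains_rec #|S| S.

Definition hit_chains (G : {set 'I_n}) : nat :=
  \sum_(F in fam | F \subset G) free_chains F * (#|G| - #|F|)`!.

Definition upper_hits (F : {set 'I_n}) : nat :=
  \sum_(G in fam | F \subset G) (#|G| - #|F|)`! * (n - #|G|)`!.

Lemma free_chainsE (S : {set 'I_n}) : 0 < #|S| ->
  free_chains S = \sum_(x in S | S :\ x \notin fam) free_chains (S :\ x).
Proof.
rewrite /free_chains; case cardS: #|S| => [|k] // _ /=.
apply: eq_bigr => x /andP[xS _].
by move: cardS; rewrite (cardsD1 x S) xS add1n => -[->].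
Qed.

Lemma sum_hit_chains_delete (G : {set 'I_n}) :
  \sum_(x in G) hit_chains (G :\ x) + (if G \in fam then free_chains G else 0)
  = hit_chains G.
Proof.
have card_del x : x \in G -> #|G :\ x| = #|G|.-1.
  by move=> xG; rewrite (cardsD1 x G) xG add1n.
rewrite /hit_chains (eq_bigr (fun x => \sum_(F in fam)
    if F \subset G :\ x then free_chains F * (#|G| - #|F|).-1`! else 0)); last first.
  by move=> x xG; rewrite big_mkcondr; apply: eq_bigr => F _; rewrite card_del // predn_sub.
have -> : (if G \in fam then free_chains G else 0) = \sum_(F in fam | F == G) free_chains F.
  case: ifP => GF.
    by rewrite (big_pred1 G) // => F /=; rewrite andbC; case: eqP => // ->.
  by rewrite big_pred0 // => F; rewrite andbC; case: eqP => // ->.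
rewrite exchange_big [in RHS]big_mkcondr big_mkcondr -big_split /=.
apply: eq_bigr => F _; rewrite -big_mkcondr /=.
have sub_del x : (x \in G) && (F \subset G :\ x) = (F \subset G) && (x \in G :\: F).
  by rewrite subsetD1 in_setD; case: (x \in G) (x \in F) (F \subset G) => [] [] [].
rewrite (eq_bigl _ _ sub_del); case: (boolP (F \subset G)) => [sub|not_sub]; last first.
  rewrite big_pred0 //.
  by case: (F =P G) => [eqFG|//]; rewrite eqFG subxx in not_sub.
rewrite sum_nat_const cardsD (setIidPr sub).
case: (F =P G) => [eqFG|neFG]; first by rewrite eqFG subnn mul0n muln1.
have : 0 < #|G| - #|F|.
  by rewrite subn_gt0 proper_card // properEneq sub andbT; apply/eqP.
by case: (#|G| - #|F|) => // k _; rewrite factS addn0 mulnCA.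
Qed.

Lemma hit_add_free_chains (G : {set 'I_n}) :
  hit_chains G + (if G \notin fam then free_chains G else 0) = (#|G|)`!.
Proof.
move: {2}#|G| (erefl #|G|) => k; elim: k G => [|k IHk] G cardG.
  rewrite -sum_hit_chains_delete big_pred0 => [|x]; last by rewrite (card0_eq cardG).
  by rewrite /free_chains cardG; case: (G \in fam).
have card_del x : x \in G -> #|G :\ x| = k.
  by move=> xG; move: cardG; rewrite (cardsD1 x G) xG add1n => -[].
have -> : (#|G|)`! = \sum_(x in G) (#|G :\ x|)`!.
  by rewrite (eq_bigr (fun=> k`!)) => [|x /card_del->]; rewrite // sum_nat_const cardG.
rewrite (eq_bigr (fun x => hit_chains (G :\ x) +
    (if G :\ x \notin fam then free_chains (G :\ x) else 0))); last first.
  by move=> x xG; rewrite IHk // card_del.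
rewrite big_split /= -big_mkcondr -free_chainsE ?cardG //.
by rewrite -sum_hit_chains_delete; case: (G \in fam); rewrite /= ?addn0.
Qed.

Lemma hit_chains_fam (G : {set 'I_n}) : G \in fam -> hit_chains G = (#|G|)`!.
Proof. by move=> GF; rewrite -hit_add_free_chains GF addn0. Qed.

Lemma hit_chains_leq (G : {set 'I_n}) : hit_chains G <= (#|G|)`!.
Proof. by rewrite -hit_add_free_chains leq_addr. Qed.

Lemma lym_free_chains : \sum_(F in fam) free_chains F * (n - #|F|)`! <= n`!.
Proof.
have := hit_chains_leq [set: 'I_n]; rewrite /hit_chains cardsT card_ord.
by under eq_bigl => F do rewrite subsetT andbT.
Qed.

Lemma sum_fact_fam_split :
  \sum_(G in fam) (#|G|)`! * (n - #|G|)`! = \sum_(F in fam) free_chains F * upper_hits F.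
Proof.
rewrite (eq_bigr (fun G => hit_chains G * (n - #|G|)`!)); last first.
  by move=> G GF; rewrite hit_chains_fam.
rewrite /hit_chains; under eq_bigr => G _ do rewrite big_distrl /=.
rewrite (exchange_big_dep (mem fam)) /=; last by move=> G F _ /andP[].
apply: eq_bigr => F FF; rewrite /upper_hits big_distrr /=.
by apply: eq_big => [G|G _]; rewrite ?FF ?mulnA.
Qed.

Local Open Scope ring_scope.

Lemma card_le_upper_hits (R : numDomainType) (c : R) :
  0 <= c ->
  (forall F, F \in fam -> (upper_hits F)%:R <= c * ((n - #|F|)`!)%:R) ->
  #|fam|%:R <= c * 'C(n, n./2)%:R.
Proof.
move=> c_ge0 local_bound.
have sum_fact : (\sum_(G in fam) (#|G|)`! * (n - #|G|)`!)%:R <= c * (n`!)%:R.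
  rewrite sum_fact_fam_split natr_sum.
  apply: le_trans (_ : \sum_(F in fam) c * (free_chains F * (n - #|F|)`!)%:R <= _).
    apply: ler_sum => F FF.
    by rewrite !natrM mulrCA ler_wpM2l ?ler0n ?local_bound.
  by rewrite -mulr_sumr ler_wpM2l // -natr_sum ler_nat lym_free_chains.
have card_fact :
    (#|fam| * n`! <= 'C(n, n./2) * \sum_(G in fam) (#|G|)`! * (n - #|G|)`!)%N.
  rewrite big_distrr /= -sum1_card big_distrl /=.
  apply: leq_sum => G _; rewrite mul1n fact_leq_bin_half_mul //.
  by rewrite -[X in (_ <= X)%N]card_ord max_card.
rewrite -(ler_nat R) 2!natrM in card_fact.
rewrite -(@ler_pM2r _ (n`!)%:R) ?ltr0n ?fact_gt0 //; apply: le_trans card_fact _.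
by rewrite -mulrA mulrCA ler_wpM2l.
Qed.

End FirstHitChains.

Lemma nabla_le_bin n (fam : {set {set 'I_n}}) (F : {set 'I_n}) j :
  nabla fam F j <= 'C(n - #|F|, j).
Proof.
rewrite /nabla; set A := [set G in fam | _].
have inj : {in A &, injective (fun G => G :\: F)}.
  move=> G1 G2; rewrite !inE => /and3P[_ sub1 _] /and3P[_ sub2 _] /= eqD.
  by rewrite -(setID G1 F) -(setID G2 F) (setIidPr sub1) (setIidPr sub2) eqD.
have -> : n - #|F| = #|~: F| by rewrite [RHS]cardsCs setCK card_ord.
rewrite -(card_in_imset inj) -cards_draws.
apply/subset_leq_card/subsetP => _ /imsetP[G + ->].
rewrite !inE => /and3P[_ sub /eqP cardG].
by rewrite cardsD (setIidPr sub) cardG addKn eqxx andbT setDE subsetIr.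
Qed.

Lemma upper_hits_by_level n (fam : {set {set 'I_n}}) (F : {set 'I_n}) :
  upper_hits fam F =
  \sum_(j < (n - #|F|).+1) nabla fam F j * (j`! * (n - #|F| - j)`!).
Proof.
set m := n - #|F|.
rewrite /upper_hits.
rewrite (partition_big (fun G : {set 'I_n} => inord (#|G| - #|F|) : 'I_m.+1) xpredT) //=.
apply: eq_bigr => j _.
have level (G : {set 'I_n}) : F \subset G ->
    (inord (#|G| - #|F|) == j :> 'I_m.+1) = (#|G| == #|F| + j).
  move=> sub; have le_F := subset_leq_card sub.
  have le_G : #|G| <= n by rewrite -[X in _ <= X]card_ord max_card.
  rewrite -(inj_eq val_inj) /= inordK; last by rewrite ltnS leq_sub2r.
  by rewrite -(eqn_add2l #|F|) subnKC.
rewrite /nabla -sum_nat_const; apply: eq_big => [G | G /andP[/andP[_ sub]]].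
  by rewrite inE; case sub: (F \subset G); rewrite ?andbF ?andbT //= level.
by rewrite level // => /eqP->; rewrite addKn subnDA.
Qed.

Section UpperHitsBound.
Local Open Scope ring_scope.
Variables (R : realFieldType) (eps : R) (n : nat) (fam : {set {set 'I_n}}) (F : {set 'I_n}).
Hypothesis eps_ge0 : 0 <= eps.
Hypothesis n_large : (10 ^ 5 <= n)%N.
Hypothesis fam_cosize : forall G, G \in fam -> (499 * n + 6 * 1000 <= 1000 * (n - #|G|))%N.
Hypothesis F_fam : F \in fam.
Hypothesis nabla_small : forall j, (4 <= j)%N -> (nabla fam F j)%:R <= eps * n%:R ^+ 4.

Let m := (n - #|F|)%N.
Let level_term j : R := (nabla fam F j * (j`! * (m - j)`!))%:R.

Lemma level_term_le_fact j : (j <= m)%N -> level_term j <= (m`!)%:R.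
Proof.
by move=> le_jm; rewrite ler_nat -(bin_fact le_jm) leq_mul2r nabla_le_bin orbT.
Qed.

Lemma level_term_le_eps j x : (4 <= j)%N -> (n ^ 4 * (j`! * (m - j)`!) <= x)%N ->
  level_term j <= eps * x%:R.
Proof.
move=> le_4j le_x; rewrite /level_term natrM.
apply: le_trans (ler_wpM2r (ler0n _ _) (nabla_small le_4j)) _.
by rewrite -mulrA ler_wpM2l // -natrX -natrM ler_nat.
Qed.

Lemma nabla_gt0_level j : (0 < nabla fam F j)%N -> (j + 6 <= m)%N.
Proof.
case/card_gt0P=> G; rewrite inE => /and3P[GF _ /eqP cardG].
by have := fam_cosize GF; rewrite cardG /m; lia.
Qed.

Lemma tail_level_term j : (6 <= j)%N ->
  level_term j <= eps * (n ^ 4 * (6`! * (m - 6)`!))%:R.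
Proof.
move=> le_6j; case: (posnP (nabla fam F j)) => [nabla0 | nabla_gt0].
  by rewrite /level_term nabla0 mul0n mulr_ge0.
apply: level_term_le_eps; first lia.
by rewrite leq_mul2l leq_fact_mul_fact_sub ?orbT //; have := nabla_gt0_level nabla_gt0; lia.
Qed.

Lemma upper_hits_le : (upper_hits fam F)%:R <= (4 + 390 * eps) * (m`!)%:R.
Proof.
have m_large : (499 * n + 6 * 1000 <= 1000 * m)%N := fam_cosize F_fam.
rewrite upper_hits_by_level -/m natr_sum -(big_mkord xpredT level_term).
rewrite (big_cat_nat (n := 4)) //=; last lia.
rewrite [\sum_(4 <= j < m.+1) _]big_ltn; last lia.
rewrite [\sum_(5 <= j < m.+1) _]big_ltn; last lia.
have low : \sum_(0 <= j < 4) level_term j <= 4 * (m`!)%:R.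
  apply: le_trans (ler_sum_nat (G := fun=> (m`!)%:R) _) _ => [j /andP[_ lt_j4]|].
    by apply: level_term_le_fact; lia.
  by rewrite sumr_const_nat subn0 mulr_natl.
have level4 : level_term 4 <= eps * (388 * m`!)%:R.
  exact: level_term_le_eps (level4_fact_bound m_large).
have level5 : level_term 5 <= eps * (m`!)%:R.
  exact: level_term_le_eps (level5_fact_bound m_large n_large).
have tail : \sum_(6 <= j < m.+1) level_term j <= eps * (m`!)%:R.
  set X := (n ^ 4 * (6`! * (m - 6)`!))%N.
  apply: le_trans (ler_sum_nat (G := fun=> eps * X%:R) _) _ => [j /andP[le_6j _]|].
    exact: tail_level_term.
  rewrite sumr_const_nat -mulrnAr ler_wpM2l // -mulrnA ler_nat.
  apply: leq_trans (tail_fact_bound m_large n_large).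
  by rewrite mulnC leq_mul2r (_ : (m.+1 - 6 <= n)%N) ?orbT // /m; lia.
rewrite natrM in level4; set M := (m`!)%:R in low level4 level5 tail *.
lra.
Qed.

End UpperHitsBound.

Local Open Scope ring_scope.

Lemma powR_two_thirds_le (R : realType) (x : R) :
  10 ^+ 12 <= x -> 10 ^+ 4 * x `^ (2 / 3) <= x.
Proof.
move=> x_large; have x_ge0 : 0 <= x by apply: le_trans x_large; rewrite exprn_ge0.
have cube : (x `^ (2 / 3)) ^+ 3 = x ^+ 2.
  by rewrite -powR_mulrn ?powR_ge0 // -powRrM (_ : 2 / 3 * 3%:R = 2%:R) ?powR_mulrn //; field.
rewrite -(@ler_pXn2r _ 3) ?nnegrE ?mulr_ge0 ?powR_ge0 ?exprn_ge0 //.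
rewrite exprMn cube -exprM [x ^+ 3]exprSr mulrC.
by rewrite ler_wpM2l ?exprn_ge0.
Qed.

Lemma cosize_large (R : realType) n k : (10 ^ 12 <= n)%N -> (k <= n)%N ->
  k%:R <= n%:R / 2 + n%:R `^ (2 / 3) :> R ->
  (499 * n + 6 * 1000 <= 1000 * (n - k))%N.
Proof.
move=> n_large le_kn le_k.
have pow_small : 10 ^+ 4 * n%:R `^ (2 / 3) <= n%:R :> R.
  by apply: powR_two_thirds_le; rewrite -natrX ler_nat.
have n_ge : 10 ^+ 4 <= n%:R :> R by rewrite -natrX ler_nat; lia.
suff : (1000 * k + 499 * n + 6 * 1000 <= 1000 * n)%N by lia.
rewrite -(ler_nat R) 2!natrD 4!natrM.
(* lra would run out of memory expanding the literal [10 ^ 12]. *)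
clear n_large; lra.
Qed.

Theorem lemma2p5 (R : realType) (eps : R) : 0 < eps ->
  exists n0 : nat, forall n : nat, (n0 <= n)%N ->
  forall fam : {set {set 'I_n}},
    (forall F, F \in fam ->
       n%:R / 2 - (n%:R : R) `^ (2 / 3) <= #|F|%:R <= n%:R / 2 + (n%:R : R) `^ (2 / 3)) ->
    (forall F, F \in fam -> forall j : nat, (4 <= j)%N ->
       ((nabla fam F j)%:R : R) <= eps * n%:R ^+ 4) ->
    (#|fam|%:R : R) <= (4 + 400 * eps) * 'C(n, n./2)%:R.
Proof.
move=> eps_gt0; have eps_ge0 := ltW eps_gt0.
exists (10 ^ 12)%N => n n_large fam fam_size fam_nabla.
have fam_cosize G : G \in fam -> (499 * n + 6 * 1000 <= 1000 * (n - #|G|))%N.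
  move=> GF; have /andP[_ le_G] := fam_size G GF.
  by apply: cosize_large le_G => //; rewrite -[X in (_ <= X)%N]card_ord max_card.
have n_large5 : (10 ^ 5 <= n)%N by lia.
have local_bound F : F \in fam ->
    (upper_hits fam F)%:R <= (4 + 390 * eps) * ((n - #|F|)`!)%:R.
  by move=> FF; apply: upper_hits_le => //; apply: fam_nabla.
apply: le_trans (card_le_upper_hits _ local_bound) _; first by rewrite addr_ge0 ?mulr_ge0.
by rewrite ler_wpM2r // lerD2l ler_wpM2r // ler_nat.
Qed.
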